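(* In the Core Tuplix Calculus $\mathbf{CTC}$ over a nonempty attribute set $A$ and a non-trivial cancellation meadow $\mathcal{D}$ (defined in the context), for data variables $u,v$ the identity \[ \gamma(u)\oplus\gamma(u-v)=\gamma(v)\oplus\gamma(u-v) \] is derivable.
   Context: Data: a meadow is a commutative ring with unit with a total unary operation $(\cdot)^{-1}$ satisfying $(u^{-1})^{-1}=u$ and $u\cdot(u\cdot u^{-1})=u$; a non-trivial cancellation meadow additionally satisfies $0\neq 1$ and the cancellation law ($u\neq 0$ and $uv=uw$ imply $v=w$). Fix such a structure $\mathcal{D}$. Data terms are built from data variables, constants $0,1$, binary $+,\cdot$ and unary $-$, $(\cdot)^{-1}$; write $p/q$ for $p\cdot q^{-1}$ and $p-q$ for $p+(-q)$. Fix a nonempty set $A$ of attributes. Tuplix terms are built from tuplix variables, constants $\epsilon$ and $\delta$, entries $a(p)$ ($a\in A$, $p$ a data term), zero tests $\gamma(p)$, and the binary operator $\oplus$. $\mathbf{CTC}$ is the two-sorted equational proof system with axioms (T1) $x\oplus y=y\oplus x$; (T2) $(x\oplus y)\oplus z=x\oplus(y\oplus z)$; (T3) $x\oplus\epsilon=x$; (T4) $x\oplus\delta=\delta$; (T5) $a(u)\oplus a(v)=a(u+v)$; (T6) $\gamma(u)=\gamma(u/u)$; (T7) $\gamma(0)=\epsilon$; (T8) $\gamma(1)=\delta$; (T9) $\gamma(u)\oplus\gamma(v)=\gamma(u/u+v/v)$; (T10) $\gamma(u-v)\oplus a(u)=\gamma(u-v)\oplus a(v)$ (for all $a\in A$),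 together with the rule (DE): for all data terms $p,q$, if $\mathcal{D}\models p=q$ then $\gamma(p)=\gamma(q)$ is derivable. *)

From HB Require Import structures.
From mathcomp Require Import all_boot all_order all_algebra.
Set Implicit Arguments. Unset Strict Implicit. Unset Printing Implicit Defensive.
Import GRing.Theory.
Local Open Scope ring_scope.

Definition meadow (R : comPzRingType) (inv : R -> R) : Prop :=
  (forall u : R, inv (inv u) = u) /\
  (forall u : R, u * (u * inv u) = u).

Definition nontrivial_cancellation_meadow (R : comPzRingType) (inv : R -> R)
  : Prop :=
  meadow inv /\ (0 : R) <> 1 /\
  (forall u v w : R, u <> 0 -> u * v = u * w -> v = w).

Inductive dterm : Type :=
| DVar : nat -> dterm
| DZero : dterm
| DOne : dterm
| DAdd : dterm -> dterm -> dterm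
| DMul : dterm -> dterm -> dterm
| DOpp : dterm -> dterm
| DInv : dterm -> dterm.

Definition DSub (p q : dterm) : dterm := DAdd p (DOpp q).
Definition DDiv (p q : dterm) : dterm := DMul p (DInv q).

Fixpoint deval (R : comPzRingType) (inv : R -> R) (rho : nat -> R)
    (p : dterm) : R :=
  match p with
  | DVar n => rho n
  | DZero => 0
  | DOne => 1
  | DAdd p q => deval inv rho p + deval inv rho q
  | DMul p q => deval inv rho p * deval inv rho q
  | DOpp p => - deval inv rho p
  | DInv p => inv (deval inv rho p)
  end.

Definition dvalid (R : comPzRingType) (inv : R -> R) (p q : dterm) : Prop :=
  forall rho : nat -> R, deval inv rho p = deval inv rho q.

Inductive tterm (A : Type) : Type :=
| TVar : nat -> tterm A
| TEps : tterm A
| TDelta : tterm A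
| TEntry : A -> dterm -> tterm A
| TGamma : dterm -> tterm A
| TOplus : tterm A -> tterm A -> tterm A.

Arguments TVar {A}. Arguments TEps {A}. Arguments TDelta {A}.
Arguments TGamma {A}.

(* ---------- The proof system CTC ----------
   Equational logic (reflexivity, symmetry, transitivity, congruence for
   the tuplix operator (+)) over all substitution instances of the axioms
   T1-T10 (data variables u,v instantiated by arbitrary data terms p,q,
   tuplix variables x,y,z by arbitrary tuplix terms), plus rule DE. *)
Inductive ctc (R : comPzRingType) (inv : R -> R) (A : Type)
  : tterm A -> tterm A -> Prop :=
| ctc_refl : forall t, ctc inv t t
| ctc_sym : forall t s, ctc inv t s -> ctc inv s t
| ctc_trans : forall t s r, ctc inv t s -> ctc inv s r -> ctc inv t r
| ctc_oplus : forall t t' s s', ctc inv t t' -> ctc inv s s' ->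
    ctc inv (TOplus t s) (TOplus t' s')
| ctc_T1 : forall x y, ctc inv (TOplus x y) (TOplus y x)
| ctc_T2 : forall x y z,
    ctc inv (TOplus (TOplus x y) z) (TOplus x (TOplus y z))
| ctc_T3 : forall x, ctc inv (TOplus x TEps) x
| ctc_T4 : forall x, ctc inv (TOplus x TDelta) TDelta
| ctc_T5 : forall (a : A) p q,
    ctc inv (TOplus (TEntry a p) (TEntry a q)) (TEntry a (DAdd p q))
| ctc_T6 : forall p, ctc inv (TGamma p) (TGamma (DDiv p p))
| ctc_T7 : ctc inv (TGamma DZero) TEps
| ctc_T8 : ctc inv (TGamma DOne) TDelta
| ctc_T9 : forall p q,
    ctc inv (TOplus (TGamma p) (TGamma q))
            (TGamma (DAdd (DDiv p p) (DDiv q q)))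
| ctc_T10 : forall (a : A) p q,
    ctc inv (TOplus (TGamma (DSub p q)) (TEntry a p))
            (TOplus (TGamma (DSub p q)) (TEntry a q))
| ctc_DE : forall p q, dvalid inv p q -> ctc inv (TGamma p) (TGamma q).

(* By T9 and T6, [gamma(p) (+) gamma(q)] is the zero test of [s(s(p) + s(q))], where
   [s(x) = x/x] is 0 at 0 and 1 elsewhere in a cancellation meadow. If [u = v] the two
   sides agree trivially; otherwise [s(u - v) = 1] and both tests become [s(s(x) + 1)],
   which is 1 as soon as [1 + 1 <> 0]. In characteristic 2 the calculus collapses:
   [epsilon = gamma(1/1 + 1/1) = gamma(1) (+) gamma(1) = delta], so every equation holds. *)
From mathcomp Require Import all_boot all_order all_algebra.
Set Implicit Arguments. Unset Strict Implicit.
Import GRing.Theory.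
Local Open Scope ring_scope.

Section CancellationMeadow.

Variables (R : comPzRingType) (inv : R -> R).
Hypothesis HD : nontrivial_cancellation_meadow inv.

Lemma meadow_oner_neq0 : (1 : R) != 0.
Proof. by case: HD => _ [/eqP]; rewrite eq_sym. Qed.

Lemma meadow_divff (x : R) : x != 0 -> x * inv x = 1.
Proof.
case: HD => [[_ mulrKinv] [_ cancel]] /eqP x_neq0.
by apply: (cancel x) => //; rewrite mulrKinv mulr1.
Qed.

Lemma meadow_divff_add1 (x : R) : (1 + 1 : R) != 0 ->
  (x * inv x + 1) * inv (x * inv x + 1) = 1.
Proof.
move=> two_neq0; apply: meadow_divff.
have [->|x_neq0] := eqVneq x 0; first by rewrite mul0r add0r meadow_oner_neq0.
by rewrite meadow_divff.
Qed.

End CancellationMeadow.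

Section CTC.

Variables (R : comPzRingType) (inv : R -> R) (A : Type).

Lemma ctc_gamma_oplus (p q : dterm) :
  ctc (A := A) inv (TOplus (TGamma p) (TGamma q))
    (TGamma (DDiv (DAdd (DDiv p p) (DDiv q q)) (DAdd (DDiv p p) (DDiv q q)))).
Proof. exact: ctc_trans (ctc_T9 _ _ _ _) (ctc_T6 _ _ _). Qed.

Lemma ctc_collapse : ctc (A := A) inv TEps TDelta ->
  forall t s : tterm A, ctc inv t s.
Proof.
move=> eps_delta.
have to_delta (t : tterm A) : ctc inv t TDelta.
  apply: ctc_trans (ctc_sym (ctc_T3 _ t)) _.
  exact: ctc_trans (ctc_oplus (ctc_refl _ t) eps_delta) (ctc_T4 _ _).
by move=> t s; apply: ctc_trans (to_delta t) (ctc_sym (to_delta s)).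
Qed.

Lemma ctc_eps_delta_char2 : nontrivial_cancellation_meadow inv ->
  (1 + 1 : R) = 0 -> ctc (A := A) inv TEps TDelta.
Proof.
move=> HD two0.
have two_ones0 : dvalid inv (DAdd (DDiv DOne DOne) (DDiv DOne DOne)) DZero.
  by move=> rho /=; rewrite (meadow_divff HD) ?(meadow_oner_neq0 HD).
apply: ctc_trans (ctc_sym (ctc_T7 _ _)) _.
apply: ctc_trans (ctc_sym (ctc_DE A two_ones0)) _.
apply: ctc_trans (ctc_sym (ctc_T9 _ _ _ _)) _.
exact: ctc_trans (ctc_oplus (ctc_T8 _ _) (ctc_T8 _ _)) (ctc_T4 _ _).
Qed.

End CTC.

Theorem lemma3 (R : comPzRingType) (inv : R -> R)
    (HD : nontrivial_cancellation_meadow inv)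
    (A : Type) (HA : inhabited A) (u v : nat) :
  ctc (A := A) inv
    (TOplus (TGamma (DVar u)) (TGamma (DSub (DVar u) (DVar v))))
    (TOplus (TGamma (DVar v)) (TGamma (DSub (DVar u) (DVar v)))).
Proof.
have [two0|two_neq0] := eqVneq (1 + 1 : R) 0.
  exact/ctc_collapse/ctc_eps_delta_char2.
apply: ctc_trans (ctc_gamma_oplus _ _ _ _) _.
apply: ctc_trans _ (ctc_sym (ctc_gamma_oplus _ _ _ _)).
apply: ctc_DE => rho /=.
have [-> //|u_neq_v] := eqVneq (rho u) (rho v).
have -> : (rho u - rho v) * inv (rho u - rho v) = 1.
  by rewrite (meadow_divff HD) ?subr_eq0.
by rewrite !(meadow_divff_add1 HD).
Qed.
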